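(* Fix $\alpha\in(0,1]$, $\epsilon>0$, a function $A:(2\pi,\infty)\to[0,\infty)$ and a function $B:\{(\beta_L,\beta_R)\in(0,\infty)^2:\beta_L\beta_R>4\pi^2\}\to[0,\infty)$. Consider the class $\mathcal{C}$ of all unitary, Virasoro invariant, modular invariant 2D CFTs (any central charge $c>1$) satisfying $$\sum_{h+\bar h\leqslant\frac c{12}+\epsilon}n_{h,\bar h}e^{-(h+\bar h)\beta}\leqslant A(\beta)\ \ (\beta>2\pi),\qquad \tilde Z_L^{\rm Vir}(\alpha;\beta_L,\beta_R)\leqslant B(\beta_L,\beta_R)\ \ (\beta_L\beta_R>4\pi^2),$$ where $n_{h,\bar h}$ are Virasoro primary multiplicities. Then for each $(\beta_L,\beta_R)\in\mathcal{D}_\alpha$ there is a constant $K<\infty$, independent of the theory in $\mathcal{C}$ and of $c$, with $\left|\log Z(\beta_L,\beta_R)-\frac c{24}(\beta_L+\beta_R)\right|\leqslant K$ for all theories in $\mathcal{C}$; and for each $(\beta_L,\beta_R)$ with $(4\pi^2/\beta_L,4\pi^2/\beta_R)\in\mathcal{D}_\alpha$ there is such a constant $K$ with $\left|\log Z(\beta_L,\beta_R)-\frac{\pi^2c}{6}\left(\frac1{\beta_L}+\frac1{\beta_R}\right)\right|\leqslant K$ for all theories in $\mathcal{C}$.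
   Context: Let $\eta(\beta)=e^{-\beta/24}\prod_{n\geqslant1}(1-e^{-n\beta})$. A unitary, Virasoro invariant, modular invariant 2D CFT with central charge $c>1$ is given by a countable set of Virasoro primary weights $(h,\bar h)$, $h,\bar h\geqslant0$, with multiplicities $n_{h,\bar h}\in\mathbb{N}$, where the vacuum $(0,0)$ has multiplicity $1$ (normalizable vacuum) and primaries with $h=0$ or $\bar h=0$ other than the vacuum have the form $(J,0)$ or $(0,J)$ with $J$ a positive integer; the partition function is $Z(\beta_L,\beta_R)=\sum n_{h,\bar h}\chi_h(\beta_L)\chi_{\bar h}(\beta_R)$ with $\chi_0(\beta)=\frac{e^{\frac{c-1}{24}\beta}}{\eta(\beta)}(1-e^{-\beta})$ and $\chi_h(\beta)=\frac{e^{\frac{c-1}{24}\beta}}{\eta(\beta)}e^{-h\beta}$ for $h>0$; $Z$ is finite for all $\beta_L,\beta_R>0$ and $Z(\beta_L,\beta_R)=Z(4\pi^2/\beta_L,4\pi^2/\beta_R)$. Define $$\tilde Z_L^{\rm Vir}(\alpha;\beta_L,\beta_R)=(1-e^{-\beta_L})(1-e^{-\beta_R})+\sum_{0<\min(h,\bar h)<\frac{\alpha(c-1)}{24}}n_{h,\bar h}e^{-h\beta_L-\bar h\beta_R}+\sum_{J\geqslant1}n_{J,0}e^{-J\beta_L}(1-e^{-\beta_R})+\sum_{J\geqslant1}n_{0,J}(1-e^{-\beta_L})e^{-J\beta_R}.$$ Let $\phi_\alpha(\beta)=\max\left\{\frac{4\pi^2}{\beta},\ \frac12\left(\alpha(4\pi-\beta)+\sqrt{\alpha^2(4\pi-\beta)^2+16\pi^2(1-\alpha)}\right)\right\}$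 and $\mathcal{D}_\alpha=\{\beta_R>2\pi,\ \beta_L>\phi_\alpha(\beta_R)\}\cup\{\beta_L>2\pi,\ \beta_R>\phi_\alpha(\beta_L)\}$. *)

From Stdlib Require Import Reals Lra.
From Coquelicot Require Import Coquelicot.
Open Scope R_scope.

Definition psum (f : nat -> R) : Rbar := Lim_seq (fun N => sum_n f N).

Fixpoint eta_pprod (beta : R) (N : nat) : R :=
  match N with
  | O => 1
  | S k => eta_pprod beta k * (1 - exp (- (INR (S k)) * beta))
  end.

Definition eta (beta : R) : R :=
  exp (- beta / 24) * real (Lim_seq (eta_pprod beta)).

Definition chi (c h beta : R) : R :=
  exp ((c - 1) / 24 * beta) / eta beta *
  (if Req_EM_T h 0 then 1 - exp (- beta) else exp (- h * beta)).

(** A candidate 2D CFT: central charge and the list of Virasoro primaries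
    (h, hbar), each primary listed once per unit of multiplicity; [None]
    entries are empty slots (allowing finitely many primaries).  The
    multiplicity n_{h,hbar} is the number of indices i with
    [spec i = Some (h, hbar)]. *)
Record CFT := mkCFT { cc : R ; spec : nat -> option (R * R) }.

Definition Zterm (T : CFT) (bL bR : R) (i : nat) : R :=
  match spec T i with
  | Some (h, hb) => chi (cc T) h bL * chi (cc T) hb bR
  | None => 0
  end.

(** Partition function (a real number; finiteness is part of [isCFT]). *)
Definition Zpart (T : CFT) (bL bR : R) : R := real (psum (Zterm T bL bR)).

Definition isCFT (T : CFT) : Prop :=
  1 < cc T /\
  (forall i h hb, spec T i = Some (h, hb) -> 0 <= h /\ 0 <= hb) /\
  (exists i0, spec T i0 = Some (0, 0) /\
     forall i, spec T i = Some (0, 0) -> i = i0) /\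
  (forall i h hb, spec T i = Some (h, hb) -> (h = 0 \/ hb = 0) ->
     (h = 0 /\ hb = 0) \/
     exists J : nat, (1 <= J)%nat /\
       ((h = INR J /\ hb = 0) \/ (h = 0 /\ hb = INR J))) /\
  (forall bL bR, 0 < bL -> 0 < bR -> ex_series (Zterm T bL bR)) /\
  (forall bL bR, 0 < bL -> 0 < bR ->
     Zpart T bL bR = Zpart T (4 * PI ^ 2 / bL) (4 * PI ^ 2 / bR)).

Definition lightTerm (T : CFT) (eps beta : R) (i : nat) : R :=
  match spec T i with
  | Some (h, hb) =>
      if Rle_dec (h + hb) (cc T / 12 + eps) then exp (- (h + hb) * beta) else 0
  | None => 0
  end.

Definition ZLterm (T : CFT) (alpha bL bR : R) (i : nat) : R :=
  match spec T i with
  | Some (h, hb) =>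
      if Req_EM_T h 0 then
        if Req_EM_T hb 0 then (1 - exp (- bL)) * (1 - exp (- bR))
        else (1 - exp (- bL)) * exp (- hb * bR)
      else if Req_EM_T hb 0 then exp (- h * bL) * (1 - exp (- bR))
      else if Rlt_dec (Rmin h hb) (alpha * (cc T - 1) / 24)
           then exp (- h * bL - hb * bR) else 0
  | None => 0
  end.

Definition ZtildeL (T : CFT) (alpha bL bR : R) : Rbar := psum (ZLterm T alpha bL bR).

Definition phi (alpha beta : R) : R :=
  Rmax (4 * PI ^ 2 / beta)
       (/ 2 * (alpha * (4 * PI - beta) +
               sqrt (alpha ^ 2 * (4 * PI - beta) ^ 2 + 16 * PI ^ 2 * (1 - alpha)))).

Definition Dom (alpha bL bR : R) : Prop :=
  (2 * PI < bR /\ phi alpha bR < bL) \/ (2 * PI < bL /\ phi alpha bL < bR).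

Definition inClass (alpha eps : R) (A : R -> R) (B : R -> R -> R) (T : CFT) : Prop :=
  isCFT T /\
  (forall beta, 2 * PI < beta -> Rbar_le (psum (lightTerm T eps beta)) (A beta)) /\
  (forall bL bR, 0 < bL -> 0 < bR -> 4 * PI ^ 2 < bL * bR ->
     Rbar_le (ZtildeL T alpha bL bR) (B bL bR)).

From Stdlib Require Import Reals Lra Lia.
From Coquelicot Require Import Coquelicot.
Open Scope R_scope.

(* Write Z = e^{c (bL + bR) / 24} / (P(bL) P(bR)) * W, where P = [eta_prod] is the eta product and
   W = [Wpart] sums the reduced characters; since the vacuum bounds W from below, it suffices to bound W
   uniformly over the class at every point of D_alpha.

   W is Z~_L (at most B) plus the heavy states, both of whose weights are at least
   alpha (c - 1) / 24; so for q <= (x, y) the heavy part at (x, y) is at most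
   e^{- alpha (c - 1) / 24 ((x - q1) + (y - q2))} W(q1, q2). Modular invariance gives
   W(q1, q2) = e^{c / 24 (q1' + q2' - q1 - q2)} (eta factors) W(q1', q2') with q' = 4 pi^2 / q.
   When q1' + q2' - q1 - q2 <= alpha ((x - q1) + (y - q2)) the powers of e^c cancel, and a uniform
   bound at (q1', q2') propagates to (x, y).

   The seed is the diagonal b > 2 pi: comparing W(b, b) with itself through modular invariance,
   the heavy states above c / 12 + eps come back with a factor e^{- eps (b - b')}, and those below
   are bounded by A, so W(b, b) <= (A + B) / (1 - e^{- eps (b - b')}). A point (a, b) with
   a <= 2 pi is reached from the seed by finitely many modular steps (a, b) |-> (t', a'), whose
   number is controlled by a margin that the steps preserve; D_alpha is where that margin is
   positive. The second estimate is the first one at the dual point. *)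

Lemma exp_le x y : x <= y -> exp x <= exp y.
Proof. intros [H | ->]; [left; apply exp_increasing | right]; auto. Qed.

Lemma exp_le_1 x : x <= 0 -> exp x <= 1.
Proof. intros Hx. rewrite <- exp_0. apply exp_le, Hx. Qed.

Lemma exp_lt_1 x : x < 0 -> exp x < 1.
Proof. intros Hx. rewrite <- exp_0. apply exp_increasing, Hx. Qed.

Lemma exp_neg_nat_mul (n : nat) (beta : R) : exp (- INR n * beta) = exp (- beta) ^ n.
Proof.
  induction n as [|n IH].
  - simpl. replace (- 0 * beta) with 0 by ring. apply exp_0.
  - rewrite S_INR, <- tech_pow_Rmult, <- IH, <- exp_plus. f_equal. ring.
Qed.

Lemma exp_neg_div_le_one_sub (a q : R) : 0 <= a <= q -> q < 1 -> exp (- (a / (1 - q))) <= 1 - a.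
Proof.
  intros [Ha Haq] Hq.
  set (t := a / (1 - a)).
  assert (Ht : t <= a / (1 - q)).
  { unfold t, Rdiv. apply Rmult_le_compat_l; auto. apply Rinv_le_contravar; lra. }
  assert (Hexp : 1 + t <= exp t) by apply exp_ineq1_le.
  assert (Hinv : exp (- t) = / exp t) by apply exp_Ropp.
  assert (H1t : / (1 + t) = 1 - a) by (unfold t; field; lra).
  assert (Ht0 : 0 <= t) by (apply Rdiv_le_0_compat; lra).
  apply Rle_trans with (exp (- t)); [apply exp_le; lra|].
  rewrite Hinv, <- H1t. apply Rinv_le_contravar; lra.
Qed.

Lemma pow_le_one x (n : nat) : 0 <= x <= 1 -> x ^ n <= 1.
Proof.
  intros Hx. induction n as [|n IH]; simpl; [lra|].
  assert (0 <= x ^ n) by (apply pow_le; lra). nra.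
Qed.

Definition eta_prod (beta : R) : R := real (Lim_seq (eta_pprod beta)).

Section EtaProduct.

Variable beta : R.
Hypothesis beta_pos : 0 < beta.

Let q := exp (- beta).

Lemma eta_factor_bounds (n : nat) : 0 <= 1 - exp (- INR (S n) * beta) <= 1.
Proof.
  assert (0 < INR (S n)) by (apply lt_0_INR; lia).
  pose proof (exp_pos (- INR (S n) * beta)).
  assert (exp (- INR (S n) * beta) <= 1) by (apply exp_le_1; nra).
  lra.
Qed.

(* Each factor satisfies 1 - q^n >= exp (- q^n / (1 - q)), and the exponents sum geometrically. *)
Lemma eta_pprod_ge (N : nat) :
  exp (- ((q - q ^ S N) / (1 - q) ^ 2)) <= eta_pprod beta N.
Proof.
  assert (Hq0 : 0 < q) by apply exp_pos.
  assert (Hq1 : q < 1) by (unfold q; apply exp_lt_1; lra).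
  induction N as [|N IH].
  - cbn [eta_pprod]. replace (- ((q - q ^ 1) / (1 - q) ^ 2)) with 0 by (field; lra).
    rewrite exp_0; lra.
  - cbn [eta_pprod]. rewrite exp_neg_nat_mul. fold q.
    assert (Hqn : 0 <= q ^ S N <= q).
    { split; [apply pow_le; lra|].
      rewrite <- tech_pow_Rmult. assert (q ^ N <= 1) by (apply pow_le_one; lra).
      assert (0 <= q ^ N) by (apply pow_le; lra). nra. }
    replace (- ((q - q ^ S (S N)) / (1 - q) ^ 2))
      with (- ((q - q ^ S N) / (1 - q) ^ 2) + - (q ^ S N / (1 - q)))
      by (rewrite <- (tech_pow_Rmult q (S N)); field; lra).
    rewrite exp_plus. apply Rmult_le_compat; try (left; apply exp_pos); auto.
    apply exp_neg_div_le_one_sub; lra.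
Qed.

Lemma eta_pprod_pos (N : nat) : 0 < eta_pprod beta N.
Proof. eapply Rlt_le_trans; [apply exp_pos | apply eta_pprod_ge]. Qed.

Lemma eta_pprod_le_1 (N : nat) : eta_pprod beta N <= 1.
Proof.
  induction N as [|N IH]; cbn [eta_pprod]; [lra|].
  pose proof (eta_factor_bounds N). pose proof (eta_pprod_pos N). nra.
Qed.

Lemma Lim_seq_eta_pprod : Lim_seq (eta_pprod beta) = Finite (eta_prod beta).
Proof.
  unfold eta_prod.
  assert (Hub : Rbar_le (Lim_seq (eta_pprod beta)) 1).
  { rewrite <- (Lim_seq_const 1). apply Lim_seq_le_loc. exists O. intros N _. apply eta_pprod_le_1. }
  assert (Hlb : Rbar_le 0 (Lim_seq (eta_pprod beta))).
  { rewrite <- (Lim_seq_const 0). apply Lim_seq_le_loc. exists O. intros N _. left; apply eta_pprod_pos. }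
  destruct (Lim_seq (eta_pprod beta)); simpl in *; tauto.
Qed.

Lemma eta_prod_pos : 0 < eta_prod beta.
Proof.
  assert (Hq0 : 0 < q) by apply exp_pos.
  assert (Hq1 : q < 1) by (unfold q; apply exp_lt_1; lra).
  assert (H : Rbar_le (exp (- (q / (1 - q) ^ 2))) (Lim_seq (eta_pprod beta))).
  { rewrite <- Lim_seq_const. apply Lim_seq_le_loc. exists O. intros N _.
    eapply Rle_trans; [|apply eta_pprod_ge]. apply exp_le.
    assert (0 < (1 - q) ^ 2) by (apply pow_lt; lra).
    assert (0 <= q ^ S N) by (apply pow_le; lra).
    unfold Rdiv. apply Ropp_le_contravar, Rmult_le_compat_r; [left; apply Rinv_0_lt_compat|]; lra. }
  rewrite Lim_seq_eta_pprod in H. eapply Rlt_le_trans; [apply exp_pos | exact H].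
Qed.

End EtaProduct.

Lemma eta_prod_le x y : 0 < x <= y -> eta_prod x <= eta_prod y.
Proof.
  intros Hxy.
  assert (H : Rbar_le (Lim_seq (eta_pprod x)) (Lim_seq (eta_pprod y))).
  { apply Lim_seq_le_loc. exists O. intros N _. induction N as [|N IH]; cbn [eta_pprod]; [lra|].
    pose proof (eta_factor_bounds x ltac:(lra) N). pose proof (eta_pprod_pos x ltac:(lra) N).
    assert (exp (- INR (S N) * y) <= exp (- INR (S N) * x)).
    { apply exp_le. assert (0 < INR (S N)) by (apply lt_0_INR; lia). nra. }
    apply Rmult_le_compat; lra. }
  rewrite !Lim_seq_eta_pprod in H by lra. exact H.
Qed.

Lemma ex_series_of_nonneg_le (a b : nat -> R) :
  (forall n, 0 <= a n <= b n) -> ex_series b -> ex_series a.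
Proof.
  intros H Hb. apply (ex_series_le a b); auto.
  intros n. change (norm (a n)) with (Rabs (a n)). rewrite Rabs_pos_eq; apply H.
Qed.

Lemma Lim_seq_sum_n (a : nat -> R) : ex_series a -> Lim_seq (sum_n a) = Finite (Series a).
Proof. intros Hex. apply is_lim_seq_unique, Series_correct, Hex. Qed.

Lemma sum_n_nonneg (a : nat -> R) (N : nat) : (forall n, 0 <= a n) -> 0 <= sum_n a N.
Proof.
  intros Ha. induction N as [|N IH]; [rewrite sum_O; auto|].
  rewrite sum_Sn. pose proof (Ha (S N)). unfold plus; simpl; lra.
Qed.

Lemma Series_ge_term (a : nat -> R) (N : nat) :
  (forall n, 0 <= a n) -> ex_series a -> a N <= Series a.
Proof.
  intros Ha Hex.
  assert (Hsum : sum_n a N <= Series a).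
  { apply is_lim_seq_incr_compare; [apply Series_correct, Hex|].
    intros n. rewrite sum_Sn. pose proof (Ha (S n)). unfold plus; simpl; lra. }
  destruct N as [|N]; [rewrite sum_O in Hsum; auto|].
  rewrite sum_Sn in Hsum. pose proof (sum_n_nonneg a N Ha). unfold plus in Hsum; simpl in Hsum. lra.
Qed.

Lemma Series_nonneg (a : nat -> R) : (forall n, 0 <= a n) -> ex_series a -> 0 <= Series a.
Proof. intros Ha Hex. eapply Rle_trans; [apply (Ha O) | apply Series_ge_term; auto]. Qed.

Lemma Series_le_of_psum_le (a b : nat -> R) (M : R) :
  (forall n, a n <= b n) -> ex_series a -> Rbar_le (psum b) M -> Series a <= M.
Proof.
  intros Hab Hex Hb.
  assert (H : Rbar_le (Lim_seq (sum_n a)) (psum b)).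
  { apply Lim_seq_le_loc. exists O. intros N _. apply sum_n_m_le, Hab. }
  rewrite Lim_seq_sum_n in H by auto. exact (Rbar_le_trans _ _ _ H Hb).
Qed.

Definition dual (x : R) : R := 4 * PI ^ 2 / x.

Lemma dual_pos x : 0 < x -> 0 < dual x.
Proof. intros. unfold dual. pose proof PI_RGT_0. apply Rdiv_lt_0_compat; nra. Qed.

Lemma pos_of_dual_pos x : 0 < dual x -> 0 < x.
Proof.
  unfold dual. intros H. pose proof PI_RGT_0.
  destruct (Rtotal_order x 0) as [Hx | [-> | Hx]]; auto; exfalso.
  - assert (/ x < 0) by (apply Rinv_lt_0_compat; auto). unfold Rdiv in H. nra.
  - unfold Rdiv in H. rewrite Rinv_0 in H. lra.
Qed.

Lemma mul_dual x : 0 < x -> x * dual x = 4 * PI ^ 2.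
Proof. intros. unfold dual. field. lra. Qed.

Lemma dual_involutive x : 0 < x -> dual (dual x) = x.
Proof. intros. unfold dual. pose proof PI_RGT_0. field. split; nra. Qed.

Lemma dual_2PI : dual (2 * PI) = 2 * PI.
Proof. unfold dual. pose proof PI_RGT_0. field. lra. Qed.

Lemma dual_lt_of_mul_gt x y : 0 < x -> 4 * PI ^ 2 < x * y -> dual x < y.
Proof. intros Hx Hxy. pose proof (mul_dual x Hx). nra. Qed.

Lemma dual_le_2PI x : 2 * PI <= x -> dual x <= 2 * PI.
Proof. intros Hx. pose proof PI_RGT_0. pose proof (mul_dual x ltac:(lra)). nra. Qed.

Lemma dual_ge_2PI x : 0 < x <= 2 * PI -> 2 * PI <= dual x.
Proof. intros Hx. pose proof PI_RGT_0. pose proof (mul_dual x ltac:(lra)). nra. Qed.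

Lemma dual_gt_2PI x : 0 < x < 2 * PI -> 2 * PI < dual x.
Proof. intros Hx. pose proof PI_RGT_0. pose proof (mul_dual x ltac:(lra)). nra. Qed.

Lemma exists_near_2PI (delta : R) : 0 < delta -> exists t, 0 < t < 2 * PI /\ dual t - t <= delta.
Proof.
  intros Hd. pose proof PI_RGT_0.
  set (e := Rmin PI (delta / 4)).
  assert (He : 0 < e <= PI) by (split; [apply Rmin_pos; lra | apply Rmin_l]).
  assert (He4 : e <= delta / 4) by apply Rmin_r.
  exists (2 * PI - e). split; [lra|].
  pose proof (mul_dual (2 * PI - e) ltac:(lra)). nra.
Qed.

Lemma quadratic_pos_of_gt_root (p q x : R) :
  0 <= p ^ 2 + 4 * q -> / 2 * (p + sqrt (p ^ 2 + 4 * q)) < x -> 0 < x ^ 2 - p * x - q.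
Proof.
  intros Hd Hx. set (s := sqrt (p ^ 2 + 4 * q)) in Hx.
  assert (Hs : s * s = p ^ 2 + 4 * q) by (apply sqrt_sqrt; auto).
  assert (0 <= s) by apply sqrt_pos.
  assert (s * s < (2 * x - p) * (2 * x - p)) by nra. nra.
Qed.

Lemma exists_quadratic_root (a b c : R) :
  0 <= a -> 0 < c -> 0 < a \/ 0 < b -> exists t, 0 < t /\ a * t ^ 2 + b * t = c.
Proof.
  intros Ha Hc Hab.
  set (s := sqrt (b ^ 2 + 4 * a * c)).
  assert (Hs : s * s = b ^ 2 + 4 * a * c) by (apply sqrt_sqrt; nra).
  assert (0 <= s) by apply sqrt_pos.
  assert (Hbs : 0 < b + s).
  { destruct Hab as [Ha' | Hb]; [|lra].
    destruct (Rlt_le_dec 0 (b + s)) as [|Hle]; auto. nra. }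
  exists (2 * c / (b + s)). split.
  - apply Rdiv_lt_0_compat; lra.
  - apply Rmult_eq_reg_r with ((b + s) ^ 2); [|nra].
    field_simplify; [|lra]. nra.
Qed.

(* Concavity of u |-> - dual u on (0, +oo). *)
Lemma min_le_affine_sub_dual (p q u1 u u2 : R) : 0 < u1 <= u -> u <= u2 ->
  Rmin (p * u1 + q - dual u1) (p * u2 + q - dual u2) <= p * u + q - dual u.
Proof.
  intros H1 H2. pose proof PI_RGT_0.
  destruct (Req_dec u1 u2) as [<- | Hne].
  - replace u with u1 by lra. apply Rmin_l.
  - set (l := (u2 - u) / (u2 - u1)).
    assert (Hl : 0 <= l <= 1).
    { unfold l. split; [apply Rdiv_le_0_compat; lra|].
      apply Rmult_le_reg_r with (u2 - u1); [lra|]. unfold Rdiv.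
      rewrite Rmult_assoc, Rinv_l; lra. }
    assert (Hid : p * u + q - dual u =
      l * (p * u1 + q - dual u1) + (1 - l) * (p * u2 + q - dual u2)
      + 4 * PI ^ 2 * ((u - u1) * (u2 - u) / (u * u1 * u2))).
    { unfold l, dual. field. repeat split; lra. }
    assert (0 <= 4 * PI ^ 2 * ((u - u1) * (u2 - u) / (u * u1 * u2))).
    { apply Rmult_le_pos; [nra|]. apply Rdiv_le_0_compat; [nra|].
      apply Rmult_lt_0_compat; nra. }
    pose proof (Rmin_l (p * u1 + q - dual u1) (p * u2 + q - dual u2)).
    pose proof (Rmin_r (p * u1 + q - dual u1) (p * u2 + q - dual u2)).
    nra.
Qed.

Section DualPairs.

Variable alpha : R.
Hypothesis alpha_pos : 0 < alpha.
Hypothesis alpha_le_1 : alpha <= 1.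

Definition margin (a b : R) : R :=
  alpha * (b - 2 * PI) + alpha * (dual a - 2 * PI) - (dual a - a).

Lemma exists_next_pair a b : 0 < a <= 2 * PI -> 4 * PI ^ 2 < a * b ->
  margin a b <= alpha * (dual a - 2 * PI) ->
  exists t, 2 * PI <= t < dual a /\
    dual a + dual t - a - t <= alpha * (b - t) /\
    margin (dual t) (dual a) = margin a b /\
    Rmin (margin a b) (alpha * (b - dual a)) <= alpha * (dual a - t).
Proof.
  intros Ha Hab Hm. pose proof PI_RGT_0.
  assert (Hm' := Hm). unfold margin in Hm'.
  assert (Haa : a * dual a = 4 * PI ^ 2) by (apply mul_dual; lra).
  assert (Ha'b : dual a < b) by (apply dual_lt_of_mul_gt; lra).
  assert (Ha'2 : 2 * PI <= dual a) by (apply dual_ge_2PI; lra).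
  set (a' := dual a) in *.
  set (kappa := alpha * b - (a' - a)).
  assert (Hkappa : kappa <= 2 * PI * alpha) by (unfold kappa; lra).
  (* Choosing dual t = (1 - alpha) t + kappa makes the step condition an equality and preserves the margin. *)
  destruct (exists_quadratic_root (1 - alpha) kappa (4 * PI ^ 2)) as (t & Ht & Hroot);
    [lra | nra | destruct (Req_dec alpha 1); [right; unfold kappa; nra | left; lra] |].
  assert (Hdt : dual t = (1 - alpha) * t + kappa).
  { apply Rmult_eq_reg_l with t; [|lra]. rewrite mul_dual by lra. rewrite <- Hroot. ring. }
  assert (Ht2 : 2 * PI <= t).
  { destruct (Rlt_le_dec t (2 * PI)) as [Hlt|]; auto.
    pose proof (dual_gt_2PI t ltac:(lra)). nra. }
  assert (Hta : t < a').
  { destruct (Rlt_le_dec t a') as [|Hle]; auto.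
    assert (Hdta : a < dual t) by (rewrite Hdt; unfold kappa; nra).
    pose proof (mul_dual t Ht).
    assert (a' * a <= t * a) by (apply Rmult_le_compat_r; lra).
    assert (t * a < t * dual t) by (apply Rmult_lt_compat_l; lra).
    lra. }
  exists t. split; [lra|]. split; [rewrite Hdt; unfold kappa; nra|]. split.
  - unfold margin. rewrite dual_involutive by lra. fold a'. rewrite Hdt. unfold kappa. ring.
  - pose proof (min_le_affine_sub_dual (1 - 2 * alpha) (4 * PI * alpha + margin a b) (2 * PI) t a'
      ltac:(lra) ltac:(lra)) as Hconc.
    assert (E1 : (1 - 2 * alpha) * (2 * PI) + (4 * PI * alpha + margin a b) - dual (2 * PI) = margin a b)
      by (rewrite dual_2PI; ring).
    assert (E2 : (1 - 2 * alpha) * a' + (4 * PI * alpha + margin a b) - dual a' = alpha * (b - a'))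
      by (unfold a'; rewrite dual_involutive by lra; unfold margin; ring).
    assert (E3 : (1 - 2 * alpha) * t + (4 * PI * alpha + margin a b) - dual t = alpha * (a' - t))
      by (rewrite Hdt; unfold margin, kappa; fold a'; ring).
    rewrite E1, E2, E3 in Hconc. exact Hconc.
Qed.

Lemma margin_pos_of_gt_phi x y : 0 < x -> 0 < y -> phi alpha y < x -> 0 < margin x y.
Proof.
  intros Hx Hy Hphi. pose proof PI_RGT_0.
  pose proof (Rle_lt_trans _ _ _ (Rmax_r _ _) Hphi) as Hroot.
  replace (alpha ^ 2 * (4 * PI - y) ^ 2 + 16 * PI ^ 2 * (1 - alpha))
    with ((alpha * (4 * PI - y)) ^ 2 + 4 * (4 * PI ^ 2 * (1 - alpha))) in Hroot by ring.
  apply quadratic_pos_of_gt_root in Hroot;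
    [| pose proof (pow2_ge_0 (alpha * (4 * PI - y))); pose proof (pow2_ge_0 PI); nra].
  apply Rmult_lt_reg_l with x; auto. rewrite Rmult_0_r.
  pose proof (mul_dual x Hx). unfold margin. nra.
Qed.

End DualPairs.

Lemma dual_le_phi alpha y : dual y <= phi alpha y.
Proof. apply Rmax_l. Qed.

Lemma Dom_pos alpha x y : Dom alpha x y -> 0 < x /\ 0 < y.
Proof.
  pose proof PI_RGT_0.
  intros [[Hy Hx] | [Hx Hy]]; pose proof (dual_le_phi alpha y); pose proof (dual_le_phi alpha x).
  - pose proof (dual_pos y ltac:(lra)). split; lra.
  - pose proof (dual_pos x ltac:(lra)). split; lra.
Qed.

Definition vchar (h x : R) : R := if Req_EM_T h 0 then 1 - exp (- x) else exp (- h * x).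

Definition Wterm (T : CFT) (x y : R) (i : nat) : R :=
  match spec T i with Some (h, hb) => vchar h x * vchar hb y | None => 0 end.

Definition Wpart (T : CFT) (x y : R) : R := Series (Wterm T x y).

Definition prefactor (c x y : R) : R := exp (c / 24 * (x + y)) / (eta_prod x * eta_prod y).

Definition eta_ratio (x y : R) : R :=
  eta_prod x * eta_prod y / (eta_prod (dual x) * eta_prod (dual y)).

Lemma prefactor_pos c x y : 0 < x -> 0 < y -> 0 < prefactor c x y.
Proof.
  intros Hx Hy. pose proof (eta_prod_pos x Hx). pose proof (eta_prod_pos y Hy).
  apply Rdiv_lt_0_compat; [apply exp_pos | nra].
Qed.

Lemma eta_ratio_pos x y : 0 < x -> 0 < y -> 0 < eta_ratio x y.
Proof.
  intros Hx Hy.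
  pose proof (eta_prod_pos x Hx). pose proof (eta_prod_pos y Hy).
  pose proof (eta_prod_pos (dual x) (dual_pos x Hx)). pose proof (eta_prod_pos (dual y) (dual_pos y Hy)).
  unfold eta_ratio. apply Rdiv_lt_0_compat; nra.
Qed.

Lemma eta_ratio_le_1 x y : 0 < x <= dual x -> 0 < y <= dual y -> eta_ratio x y <= 1.
Proof.
  intros Hx Hy.
  pose proof (eta_prod_pos x ltac:(lra)). pose proof (eta_prod_pos y ltac:(lra)).
  pose proof (eta_prod_le x (dual x) Hx). pose proof (eta_prod_le y (dual y) Hy).
  unfold eta_ratio. apply Rmult_le_reg_r with (eta_prod (dual x) * eta_prod (dual y)); [nra|].
  unfold Rdiv. rewrite Rmult_assoc, Rinv_l by nra. nra.
Qed.

Lemma chi_eq c h beta : 0 < beta -> chi c h beta = exp (c / 24 * beta) / eta_prod beta * vchar h beta.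
Proof.
  intros Hb. unfold chi, eta, vchar. fold (eta_prod beta).
  pose proof (eta_prod_pos beta Hb). pose proof (exp_pos (- beta / 24)).
  replace (exp (c / 24 * beta)) with (exp ((c - 1) / 24 * beta) / exp (- beta / 24))
    by (unfold Rdiv; rewrite <- exp_Ropp, <- exp_plus; f_equal; field).
  destruct (Req_EM_T h 0); field; lra.
Qed.

Lemma Zterm_eq T x y i : 0 < x -> 0 < y -> Zterm T x y i = prefactor (cc T) x y * Wterm T x y i.
Proof.
  intros Hx Hy. unfold Zterm, Wterm, prefactor.
  destruct (spec T i) as [[h hb]|]; [|ring].
  rewrite !chi_eq by auto. rewrite Rmult_plus_distr_l, exp_plus.
  pose proof (eta_prod_pos x Hx). pose proof (eta_prod_pos y Hy). field; lra.
Qed.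

Lemma Zpart_eq T x y : 0 < x -> 0 < y -> Zpart T x y = prefactor (cc T) x y * Wpart T x y.
Proof.
  intros Hx Hy. unfold Wpart. rewrite <- Series_scal_l.
  apply Series_ext. intros i. apply Zterm_eq; auto.
Qed.

Lemma isCFT_cc_gt_1 T : isCFT T -> 1 < cc T.
Proof. intros HT. apply HT. Qed.

Lemma isCFT_vacuum T : isCFT T -> exists i0, spec T i0 = Some (0, 0).
Proof. intros (_ & _ & (i0 & Hi0 & _) & _). exists i0. exact Hi0. Qed.

Lemma isCFT_modular T bL bR : isCFT T -> 0 < bL -> 0 < bR ->
  Zpart T bL bR = Zpart T (dual bL) (dual bR).
Proof. intros (_ & _ & _ & _ & _ & Hmod). apply Hmod. Qed.

Lemma vchar_nonneg h x : 0 < x -> 0 <= vchar h x.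
Proof.
  intros Hx. unfold vchar. destruct (Req_EM_T h 0).
  - pose proof (exp_lt_1 (- x) ltac:(lra)). lra.
  - left. apply exp_pos.
Qed.

Lemma Wterm_nonneg T x y i : 0 < x -> 0 < y -> 0 <= Wterm T x y i.
Proof.
  intros Hx Hy. unfold Wterm. destruct (spec T i) as [[h hb]|]; [|lra].
  apply Rmult_le_pos; apply vchar_nonneg; auto.
Qed.

Lemma ex_series_Wterm T x y : isCFT T -> 0 < x -> 0 < y -> ex_series (Wterm T x y).
Proof.
  intros (_ & _ & _ & _ & Hex & _) Hx Hy.
  pose proof (prefactor_pos (cc T) x y Hx Hy) as Hp.
  apply (ex_series_ext (fun i => / prefactor (cc T) x y * Zterm T x y i)).
  - intros i. cbn. rewrite Zterm_eq by auto. field. lra.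
  - exact (ex_series_scal_l (/ prefactor (cc T) x y) _ (Hex x y Hx Hy)).
Qed.

Lemma Wpart_nonneg T x y : isCFT T -> 0 < x -> 0 < y -> 0 <= Wpart T x y.
Proof.
  intros HT Hx Hy. apply Series_nonneg; [intros; apply Wterm_nonneg | apply ex_series_Wterm]; auto.
Qed.

Lemma Wpart_modular T x y : isCFT T -> 0 < x -> 0 < y ->
  Wpart T x y = exp (cc T / 24 * (dual x + dual y - x - y)) * eta_ratio x y * Wpart T (dual x) (dual y).
Proof.
  intros HT Hx Hy.
  pose proof (isCFT_modular T x y HT Hx Hy) as Hmod.
  rewrite !Zpart_eq in Hmod by (auto; apply dual_pos; auto).
  pose proof (prefactor_pos (cc T) x y Hx Hy).
  apply Rmult_eq_reg_l with (prefactor (cc T) x y); [|lra]. rewrite Hmod.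
  unfold prefactor, eta_ratio.
  pose proof (eta_prod_pos x Hx). pose proof (eta_prod_pos y Hy).
  pose proof (eta_prod_pos (dual x) (dual_pos x Hx)). pose proof (eta_prod_pos (dual y) (dual_pos y Hy)).
  replace (exp (cc T / 24 * (dual x + dual y)))
    with (exp (cc T / 24 * (x + y)) * exp (cc T / 24 * (dual x + dual y - x - y)))
    by (rewrite <- exp_plus; f_equal; ring).
  field. repeat split; lra.
Qed.

Definition heavy_term (T : CFT) (alpha x y : R) (i : nat) : R :=
  Wterm T x y i - ZLterm T alpha x y i.

Lemma ZLterm_cases T alpha i :
  (forall x y, ZLterm T alpha x y i = Wterm T x y i) \/
  exists h hb, spec T i = Some (h, hb) /\
    alpha * (cc T - 1) / 24 <= h /\ alpha * (cc T - 1) / 24 <= hb /\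
    forall x y, ZLterm T alpha x y i = 0 /\ Wterm T x y i = exp (- h * x - hb * y).
Proof.
  unfold ZLterm, Wterm, vchar. destruct (spec T i) as [[h hb]|]; [|left; reflexivity].
  destruct (Req_EM_T h 0); destruct (Req_EM_T hb 0); try (left; reflexivity).
  destruct (Rlt_dec (Rmin h hb) (alpha * (cc T - 1) / 24)) as [Hlt | Hge].
  - left. intros. rewrite <- exp_plus. f_equal. ring.
  - right. apply Rnot_lt_le in Hge. exists h, hb. repeat split.
    + eapply Rle_trans; [exact Hge | apply Rmin_l].
    + eapply Rle_trans; [exact Hge | apply Rmin_r].
    + rewrite <- exp_plus. f_equal. ring.
Qed.

Lemma heavy_term_cases T alpha i :
  (forall x y, heavy_term T alpha x y i = 0) \/
  exists h hb, spec T i = Some (h, hb) /\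
    alpha * (cc T - 1) / 24 <= h /\ alpha * (cc T - 1) / 24 <= hb /\
    forall x y, heavy_term T alpha x y i = exp (- h * x - hb * y).
Proof.
  unfold heavy_term. destruct (ZLterm_cases T alpha i) as [HZ | (h & hb & Hs & Hh & Hhb & HZ)].
  - left. intros x y. rewrite HZ. ring.
  - right. exists h, hb. repeat split; auto. intros x y. destruct (HZ x y) as [-> ->]. ring.
Qed.

Lemma ZLterm_bounds T alpha x y i : 0 < x -> 0 < y ->
  0 <= ZLterm T alpha x y i <= Wterm T x y i.
Proof.
  intros Hx Hy. pose proof (Wterm_nonneg T x y i Hx Hy).
  destruct (ZLterm_cases T alpha i) as [HZ | (h & hb & _ & _ & _ & HZ)].
  - rewrite HZ. lra.
  - destruct (HZ x y) as [-> _]. lra.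
Qed.

Lemma heavy_term_bounds T alpha x y i : 0 < x -> 0 < y ->
  0 <= heavy_term T alpha x y i <= Wterm T x y i.
Proof. intros Hx Hy. pose proof (ZLterm_bounds T alpha x y i Hx Hy). unfold heavy_term. lra. Qed.

Lemma ex_series_ZLterm T alpha x y : isCFT T -> 0 < x -> 0 < y -> ex_series (ZLterm T alpha x y).
Proof.
  intros HT Hx Hy. apply (ex_series_of_nonneg_le _ (Wterm T x y)); [|apply ex_series_Wterm; auto].
  intros; apply ZLterm_bounds; auto.
Qed.

Lemma ex_series_heavy_term T alpha x y : isCFT T -> 0 < x -> 0 < y -> ex_series (heavy_term T alpha x y).
Proof.
  intros HT Hx Hy. apply (ex_series_of_nonneg_le _ (Wterm T x y)); [|apply ex_series_Wterm; auto].
  intros; apply heavy_term_bounds; auto.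
Qed.

Lemma Wpart_split T alpha x y : isCFT T -> 0 < x -> 0 < y ->
  Wpart T x y = Series (ZLterm T alpha x y) + Series (heavy_term T alpha x y).
Proof.
  intros HT Hx Hy. unfold Wpart.
  rewrite <- Series_plus by (apply ex_series_ZLterm || apply ex_series_heavy_term; auto).
  apply Series_ext. intros i. unfold heavy_term. ring.
Qed.

Lemma Series_heavy_term_le_Wpart T alpha x y : isCFT T -> 0 < x -> 0 < y ->
  Series (heavy_term T alpha x y) <= Wpart T x y.
Proof.
  intros HT Hx Hy. apply Series_le; [intros; apply heavy_term_bounds | apply ex_series_Wterm]; auto.
Qed.

Lemma heavy_term_shift T alpha x1 y1 x2 y2 i : x1 <= x2 -> y1 <= y2 ->
  heavy_term T alpha x2 y2 i <=
  exp (- (alpha * (cc T - 1) / 24) * ((x2 - x1) + (y2 - y1))) * heavy_term T alpha x1 y1 i.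
Proof.
  intros Hx Hy. destruct (heavy_term_cases T alpha i) as [H0 | (h & hb & _ & Hh & Hhb & Hexp)].
  - rewrite !H0. lra.
  - rewrite !Hexp, <- exp_plus. apply exp_le. nra.
Qed.

Lemma Series_heavy_term_shift T alpha x1 y1 x2 y2 :
  isCFT T -> 0 < x1 -> 0 < y1 -> x1 <= x2 -> y1 <= y2 ->
  Series (heavy_term T alpha x2 y2) <=
  exp (- (alpha * (cc T - 1) / 24) * ((x2 - x1) + (y2 - y1))) * Series (heavy_term T alpha x1 y1).
Proof.
  intros HT Hx1 Hy1 Hx Hy. rewrite <- Series_scal_l. apply Series_le.
  - intros i. split; [apply heavy_term_bounds; lra | apply heavy_term_shift; auto].
  - exact (ex_series_scal_l _ _ (ex_series_heavy_term T alpha x1 y1 HT Hx1 Hy1)).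
Qed.

Lemma lightTerm_nonneg T eps beta i : 0 <= lightTerm T eps beta i.
Proof.
  unfold lightTerm. destruct (spec T i) as [[h hb]|]; [destruct Rle_dec|]; try lra.
  left. apply exp_pos.
Qed.

Lemma heavy_term_diag T alpha eps b' b i : b' <= b ->
  heavy_term T alpha b b i - exp (- (cc T / 12 + eps) * (b - b')) * heavy_term T alpha b' b' i
  <= lightTerm T eps b i.
Proof.
  intros Hb. pose proof (lightTerm_nonneg T eps b i).
  destruct (heavy_term_cases T alpha i) as [H0 | (h & hb & Hs & _ & _ & Hexp)].
  - rewrite !H0. lra.
  - rewrite !Hexp. unfold lightTerm. rewrite Hs.
    pose proof (exp_pos (- (cc T / 12 + eps) * (b - b'))). pose proof (exp_pos (- h * b' - hb * b')).
    destruct (Rle_dec (h + hb) (cc T / 12 + eps)) as [Hle | Hgt].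
    + replace (- (h + hb) * b) with (- h * b - hb * b) by ring. nra.
    + rewrite <- exp_plus.
      enough (exp (- h * b - hb * b) <= exp (- (cc T / 12 + eps) * (b - b') + (- h * b' - hb * b'))) by lra.
      apply exp_le. nra.
Qed.

Lemma Series_heavy_term_diag T alpha eps b' b (M : R) : isCFT T -> 0 < b' <= b ->
  Rbar_le (psum (lightTerm T eps b)) M ->
  Series (heavy_term T alpha b b) <=
  M + exp (- (cc T / 12 + eps) * (b - b')) * Series (heavy_term T alpha b' b').
Proof.
  intros HT Hb HM.
  assert (Hb0 : 0 < b) by lra.
  pose proof (ex_series_heavy_term T alpha b b HT Hb0 Hb0) as E.
  pose proof (ex_series_scal_l (exp (- (cc T / 12 + eps) * (b - b'))) _
    (ex_series_heavy_term T alpha b' b' HT (proj1 Hb) (proj1 Hb))) as E'.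
  pose proof (Series_le_of_psum_le _ _ M (fun i => heavy_term_diag T alpha eps b' b i (proj2 Hb))
    (ex_series_minus _ _ E E') HM) as H.
  rewrite Series_minus, Series_scal_l in H by assumption. lra.
Qed.

Lemma Wpart_ge_vacuum T x y : isCFT T -> 0 < x -> 0 < y ->
  (1 - exp (- x)) * (1 - exp (- y)) <= Wpart T x y.
Proof.
  intros HT Hx Hy. destruct (isCFT_vacuum T HT) as [i0 Hi0].
  replace ((1 - exp (- x)) * (1 - exp (- y))) with (Wterm T x y i0)
    by (unfold Wterm, vchar; rewrite Hi0; destruct (Req_EM_T 0 0); [reflexivity | contradiction]).
  apply Series_ge_term; [intros; apply Wterm_nonneg | apply ex_series_Wterm]; auto.
Qed.

Section UniformBounds.

Variables (alpha eps : R) (A : R -> R) (B : R -> R -> R).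
Hypothesis alpha_pos : 0 < alpha.
Hypothesis alpha_le_1 : alpha <= 1.
Hypothesis eps_pos : 0 < eps.

Definition bounded (x y : R) : Prop :=
  exists K, forall T, inClass alpha eps A B T -> Wpart T x y <= K.

Lemma Series_ZLterm_le T x y : inClass alpha eps A B T -> 0 < x -> 0 < y -> 4 * PI ^ 2 < x * y ->
  Series (ZLterm T alpha x y) <= B x y.
Proof.
  intros (HT & _ & HB) Hx Hy Hxy.
  apply (Series_le_of_psum_le _ _ _ (fun i => Rle_refl _)); [apply ex_series_ZLterm | apply HB]; auto.
Qed.

Lemma Wpart_le_shift T x y q1 q2 : inClass alpha eps A B T ->
  0 < q1 <= x -> 0 < q2 <= y -> 4 * PI ^ 2 < x * y ->
  Wpart T x y <= B x y + exp (- (alpha * (cc T - 1) / 24) * ((x - q1) + (y - q2))) * Wpart T q1 q2.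
Proof.
  intros HC Hq1 Hq2 Hxy. pose proof HC as (HT & _ & _).
  rewrite (Wpart_split T alpha x y HT ltac:(lra) ltac:(lra)).
  pose proof (Series_ZLterm_le T x y HC ltac:(lra) ltac:(lra) Hxy).
  pose proof (Series_heavy_term_shift T alpha q1 q2 x y HT ltac:(lra) ltac:(lra) ltac:(lra) ltac:(lra)).
  pose proof (Series_heavy_term_le_Wpart T alpha q1 q2 HT ltac:(lra) ltac:(lra)).
  pose proof (exp_pos (- (alpha * (cc T - 1) / 24) * ((x - q1) + (y - q2)))). nra.
Qed.

Lemma bounded_mono x y q1 q2 : 0 < q1 <= x -> 0 < q2 <= y -> 4 * PI ^ 2 < x * y ->
  bounded q1 q2 -> bounded x y.
Proof.
  intros Hq1 Hq2 Hxy [K HK]. exists (B x y + Rmax K 0). intros T HC.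
  pose proof (Wpart_le_shift T x y q1 q2 HC Hq1 Hq2 Hxy).
  pose proof (isCFT_cc_gt_1 T (proj1 HC)).
  assert (Hexp : exp (- (alpha * (cc T - 1) / 24) * ((x - q1) + (y - q2))) <= 1).
  { apply exp_le_1. assert (0 <= alpha * (cc T - 1)) by nra. nra. }
  pose proof (HK T HC). pose proof (Rmax_l K 0). pose proof (Rmax_r K 0).
  pose proof (Wpart_nonneg T q1 q2 (proj1 HC) ltac:(lra) ltac:(lra)).
  pose proof (exp_pos (- (alpha * (cc T - 1) / 24) * ((x - q1) + (y - q2)))). nra.
Qed.

Lemma Wpart_diag_le T b : inClass alpha eps A B T -> 2 * PI < b ->
  (1 - exp (- eps * (b - dual b))) * Wpart T b b <= A b + B b b.
Proof.
  intros HC Hb. pose proof HC as (HT & HA & _). pose proof PI_RGT_0.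
  pose proof (dual_le_2PI b ltac:(lra)). pose proof (dual_pos b ltac:(lra)).
  assert (Hbb : dual (dual b) = b) by (apply dual_involutive; lra).
  set (b' := dual b) in *.
  set (th := exp (- (cc T / 12 + eps) * (b - b'))).
  set (E := exp (cc T / 24 * (b + b - b' - b'))).
  assert (HthE : th * E = exp (- eps * (b - b'))) by (unfold th, E; rewrite <- exp_plus; f_equal; lra).
  assert (Hth : 0 < th) by apply exp_pos. assert (HE : 0 < E) by apply exp_pos.
  pose proof (Series_ZLterm_le T b b HC ltac:(lra) ltac:(lra) ltac:(nra)).
  pose proof (Series_heavy_term_diag T alpha eps b' b (A b) HT ltac:(lra) (HA b Hb)) as Hdiag.
  fold th in Hdiag.
  pose proof (Series_heavy_term_le_Wpart T alpha b' b' HT ltac:(lra) ltac:(lra)) as Hheavy.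
  pose proof (Wpart_modular T b' b' HT ltac:(lra) ltac:(lra)) as Hmod. rewrite Hbb in Hmod.
  assert (Hrho : eta_ratio b' b' <= 1) by (apply eta_ratio_le_1; lra).
  pose proof (eta_ratio_pos b' b' ltac:(lra) ltac:(lra)).
  pose proof (Wpart_nonneg T b b HT ltac:(lra) ltac:(lra)).
  assert (Hback : th * Wpart T b' b' <= exp (- eps * (b - b')) * Wpart T b b).
  { rewrite Hmod, <- HthE. fold E.
    replace (th * (E * eta_ratio b' b' * Wpart T b b))
      with (th * E * (eta_ratio b' b' * Wpart T b b)) by ring.
    apply Rmult_le_compat_l; nra. }
  assert (th * Series (heavy_term T alpha b' b') <= th * Wpart T b' b') by (apply Rmult_le_compat_l; lra).
  rewrite (Wpart_split T alpha b b HT ltac:(lra) ltac:(lra)) in *. lra.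
Qed.

Lemma bounded_diag b : 2 * PI < b -> bounded b b.
Proof.
  intros Hb. pose proof PI_RGT_0.
  pose proof (dual_le_2PI b ltac:(lra)).
  assert (Hth : exp (- eps * (b - dual b)) < 1) by (apply exp_lt_1; nra).
  exists ((A b + B b b) / (1 - exp (- eps * (b - dual b)))). intros T HC.
  apply Rmult_le_reg_l with (1 - exp (- eps * (b - dual b))); [lra|].
  replace ((1 - exp (- eps * (b - dual b))) * ((A b + B b b) / (1 - exp (- eps * (b - dual b)))))
    with (A b + B b b) by (field; lra).
  apply Wpart_diag_le; auto.
Qed.

Lemma bounded_far x y : 2 * PI < x -> 2 * PI < y -> bounded x y.
Proof.
  intros Hx Hy. pose proof PI_RGT_0.
  assert (Hm : 2 * PI < Rmin x y) by (apply Rmin_glb_lt; auto).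
  apply (bounded_mono x y (Rmin x y) (Rmin x y)); try split; try lra; try apply Rmin_l; try apply Rmin_r.
  - nra.
  - apply bounded_diag, Hm.
Qed.

Lemma bounded_modular_step x y q1 q2 : 0 < q1 <= x -> 0 < q2 <= y -> 4 * PI ^ 2 < x * y ->
  dual q1 + dual q2 - q1 - q2 <= alpha * ((x - q1) + (y - q2)) ->
  bounded (dual q1) (dual q2) -> bounded x y.
Proof.
  intros Hq1 Hq2 Hxy Hgap [K HK].
  set (S := dual q1 + dual q2 - q1 - q2) in *.
  set (G := (x - q1) + (y - q2)) in *.
  exists (B x y + exp (S / 24) * eta_ratio q1 q2 * Rmax K 0). intros T HC.
  pose proof (isCFT_cc_gt_1 T (proj1 HC)).
  pose proof (Wpart_le_shift T x y q1 q2 HC Hq1 Hq2 Hxy) as Hshift.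
  pose proof (Wpart_modular T q1 q2 (proj1 HC) ltac:(lra) ltac:(lra)) as Hmod.
  fold G in Hshift. fold S in Hmod.
  set (decay := exp (- (alpha * (cc T - 1) / 24) * G)) in *.
  set (growth := exp (cc T / 24 * S)) in *.
  (* (c - 1) S <= alpha (c - 1) G: the heavy decay pays for the modular growth up to a c-independent factor. *)
  assert (Hgain : decay * growth <= exp (S / 24)).
  { unfold decay, growth. rewrite <- exp_plus. apply exp_le.
    assert ((cc T - 1) * S <= (cc T - 1) * (alpha * G)) by nra. nra. }
  assert (HW' : Wpart T (dual q1) (dual q2) <= Rmax K 0) by (eapply Rle_trans; [apply HK, HC | apply Rmax_l]).
  pose proof (Wpart_nonneg T (dual q1) (dual q2) (proj1 HC) (dual_pos q1 ltac:(lra)) (dual_pos q2 ltac:(lra))).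
  pose proof (eta_ratio_pos q1 q2 ltac:(lra) ltac:(lra)).
  assert (0 < decay) by apply exp_pos. assert (0 < growth) by apply exp_pos.
  enough (decay * Wpart T q1 q2 <= exp (S / 24) * (eta_ratio q1 q2 * Rmax K 0)) by lra.
  rewrite Hmod. replace (decay * (growth * eta_ratio q1 q2 * Wpart T (dual q1) (dual q2)))
    with (decay * growth * (eta_ratio q1 q2 * Wpart T (dual q1) (dual q2))) by ring.
  apply Rmult_le_compat; [nra | nra | exact Hgain | apply Rmult_le_compat_l; lra].
Qed.

Lemma bounded_base a b : 0 < a <= 2 * PI -> 4 * PI ^ 2 < a * b ->
  dual a - a < alpha * (b - 2 * PI) -> bounded a b /\ bounded b a.
Proof.
  intros Ha Hab Hgap. pose proof PI_RGT_0.
  pose proof (dual_lt_of_mul_gt a b ltac:(lra) Hab). pose proof (dual_ge_2PI a Ha).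
  destruct (exists_near_2PI ((alpha * (b - 2 * PI) - (dual a - a)) / 2) ltac:(lra)) as (t & Ht & Htd).
  pose proof (dual_gt_2PI t Ht).
  assert (Hba : 4 * PI ^ 2 < b * a) by lra.
  assert (alpha * (b - 2 * PI) <= alpha * (b - t)) by (apply Rmult_le_compat_l; lra).
  assert (0 <= alpha * (2 * PI - t)) by (apply Rmult_le_pos; lra).
  destruct (Rle_lt_or_eq_dec a (2 * PI) (proj2 Ha)) as [Hlt | ->].
  - pose proof (dual_gt_2PI a ltac:(lra)).
    split.
    + apply (bounded_modular_step a b a t); try lra. apply bounded_far; auto.
    + apply (bounded_modular_step b a t a); try lra. apply bounded_far; auto.
  - rewrite dual_2PI in Hgap.
    split; [apply (bounded_modular_step (2 * PI) b t t) | apply (bounded_modular_step b (2 * PI) t t)];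
      try lra; apply bounded_far; auto.
Qed.

(* Along the steps of [exists_next_pair] the margin is invariant, the step size
   min (margin, alpha (b - dual a)) does not decrease, and alpha (dual a - 2 PI) drops by at least it. *)
Lemma bounded_below_2PI_steps (n : nat) : forall a b, 0 < a <= 2 * PI -> 4 * PI ^ 2 < a * b ->
  0 < margin alpha a b ->
  alpha * (dual a - 2 * PI) <= INR n * Rmin (margin alpha a b) (alpha * (b - dual a)) ->
  bounded a b /\ bounded b a.
Proof.
  induction n as [|n IH]; intros a b Ha Hab Hm Hn.
  all: destruct (Rlt_le_dec (alpha * (dual a - 2 * PI)) (margin alpha a b)) as [Hbase | Hstep];
    [apply bounded_base; auto; unfold margin in Hbase; lra |].
  - pose proof (dual_ge_2PI a Ha). simpl in Hn. nra.
  - destruct (exists_next_pair alpha alpha_pos alpha_le_1 a b Ha Hab Hstep) as (t & Ht & Hchain & Hmt & Hmin).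
    pose proof PI_RGT_0. pose proof (dual_pos t ltac:(lra)).
    pose proof (dual_lt_of_mul_gt a b ltac:(lra) Hab).
    assert (Hta : 4 * PI ^ 2 < dual t * dual a).
    { rewrite <- (mul_dual t) by lra. rewrite Rmult_comm. apply Rmult_lt_compat_l; lra. }
    set (mu := Rmin (margin alpha a b) (alpha * (b - dual a))) in *.
    assert (Hmu : mu <= Rmin (margin alpha a b) (alpha * (dual a - t)))
      by (apply Rmin_glb; [apply Rmin_l | lra]).
    assert (INR n * mu <= INR n * Rmin (margin alpha a b) (alpha * (dual a - t)))
      by (apply Rmult_le_compat_l; [apply pos_INR | exact Hmu]).
    rewrite S_INR in Hn.
    destruct (IH (dual t) (dual a)) as [Hta' Hat']; rewrite ?dual_involutive, ?Hmt by lra; try lra.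
    + split; [lra | apply dual_le_2PI; lra].
    + split.
      * apply (bounded_modular_step a b a t); try lra. exact Hat'.
      * apply (bounded_modular_step b a t a); try lra. exact Hta'.
Qed.

Lemma bounded_below_2PI a b : 0 < a <= 2 * PI -> 4 * PI ^ 2 < a * b -> 0 < margin alpha a b ->
  bounded a b /\ bounded b a.
Proof.
  intros Ha Hab Hm.
  assert (Hmu : 0 < Rmin (margin alpha a b) (alpha * (b - dual a))).
  { apply Rmin_pos; auto. pose proof (dual_lt_of_mul_gt a b ltac:(lra) Hab). nra. }
  destruct (INR_archimed _ (alpha * (dual a - 2 * PI)) Hmu) as [n Hn].
  apply (bounded_below_2PI_steps n); auto. lra.
Qed.

Lemma bounded_of_phi_lt x y : 2 * PI < y -> phi alpha y < x -> bounded x y /\ bounded y x.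
Proof.
  intros Hy Hx. pose proof PI_RGT_0.
  pose proof (dual_le_phi alpha y). pose proof (dual_pos y ltac:(lra)).
  pose proof (mul_dual y ltac:(lra)).
  assert (Hxy : dual y * y < x * y) by (apply Rmult_lt_compat_r; lra).
  destruct (Rle_lt_dec x (2 * PI)) as [Hle | Hgt].
  - apply bounded_below_2PI; try lra. apply margin_pos_of_gt_phi; auto; lra.
  - split; apply bounded_far; auto.
Qed.

Lemma bounded_Dom x y : Dom alpha x y -> bounded x y.
Proof. intros [[Hy Hx] | [Hx Hy]]; [apply (bounded_of_phi_lt x y) | apply (bounded_of_phi_lt y x)]; auto. Qed.

Lemma log_Zpart_bound_of_bounded x y : 0 < x -> 0 < y -> bounded x y ->
  exists K, forall T, inClass alpha eps A B T -> Rabs (ln (Zpart T x y) - cc T / 24 * (x + y)) <= K.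
Proof.
  intros Hx Hy [K HK].
  set (vac := (1 - exp (- x)) * (1 - exp (- y))).
  assert (Hvac : 0 < vac).
  { pose proof (exp_lt_1 (- x) ltac:(lra)). pose proof (exp_lt_1 (- y) ltac:(lra)).
    apply Rmult_lt_0_compat; lra. }
  set (P := eta_prod x * eta_prod y).
  assert (HP : 0 < P) by (apply Rmult_lt_0_compat; apply eta_prod_pos; auto).
  exists (Rabs (ln (Rmax K vac)) + Rabs (ln vac) + Rabs (ln P)). intros T HC.
  pose proof (Wpart_ge_vacuum T x y (proj1 HC) Hx Hy) as Hlow. fold vac in Hlow.
  assert (Hup : Wpart T x y <= Rmax K vac) by (eapply Rle_trans; [apply HK, HC | apply Rmax_l]).
  assert (Hln : ln (Zpart T x y) - cc T / 24 * (x + y) = ln (Wpart T x y) - ln P).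
  { rewrite Zpart_eq by auto. unfold prefactor. fold P.
    pose proof (exp_pos (cc T / 24 * (x + y))).
    rewrite ln_mult, ln_div, ln_exp by (try apply Rdiv_lt_0_compat; lra).
    ring. }
  rewrite Hln.
  assert (ln vac <= ln (Wpart T x y)) by (apply ln_le; auto).
  assert (ln (Wpart T x y) <= ln (Rmax K vac)) by (apply ln_le; lra).
  unfold Rabs. repeat destruct Rcase_abs; lra.
Qed.

End UniformBounds.

Theorem corollary2 (alpha eps : R) (A : R -> R) (B : R -> R -> R) :
  0 < alpha <= 1 -> 0 < eps ->
  (forall beta, 2 * PI < beta -> 0 <= A beta) ->
  (forall bL bR, 0 < bL -> 0 < bR -> 4 * PI ^ 2 < bL * bR -> 0 <= B bL bR) ->
  (forall bL bR, Dom alpha bL bR ->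
     exists K : R, forall T : CFT, inClass alpha eps A B T ->
       Rabs (ln (Zpart T bL bR) - cc T / 24 * (bL + bR)) <= K) /\
  (forall bL bR, Dom alpha (4 * PI ^ 2 / bL) (4 * PI ^ 2 / bR) ->
     exists K : R, forall T : CFT, inClass alpha eps A B T ->
       Rabs (ln (Zpart T bL bR) - PI ^ 2 * cc T / 6 * (/ bL + / bR)) <= K).
Proof.
  intros [Ha Ha1] He _ _.
  assert (Hdirect : forall bL bR, Dom alpha bL bR ->
     exists K : R, forall T : CFT, inClass alpha eps A B T ->
       Rabs (ln (Zpart T bL bR) - cc T / 24 * (bL + bR)) <= K).
  { intros bL bR HD. destruct (Dom_pos alpha bL bR HD).
    apply log_Zpart_bound_of_bounded; auto. apply bounded_Dom; auto. }
  split; [exact Hdirect|].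
  intros bL bR HD. destruct (Dom_pos alpha _ _ HD) as [HL HR].
  apply pos_of_dual_pos in HL. apply pos_of_dual_pos in HR.
  destruct (Hdirect _ _ HD) as [K HK]. exists K. intros T HC.
  rewrite (isCFT_modular T bL bR (proj1 HC) HL HR).
  replace (PI ^ 2 * cc T / 6 * (/ bL + / bR)) with (cc T / 24 * (dual bL + dual bR))
    by (unfold dual; field; lra).
  apply HK, HC.
Qed.
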